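(* For each integer $N\ge0$, the set of series $X=\sum_{p,q\ge0}x_{p,q}a^pb^q\in\widehat{\mathcal{A}}$ such that there exist $R>1$ and $C_R>0$ with $$|x_{p,q}|\le C_RR^{p+q}\frac{(p+q)!}{p!}(1+p+q)^N\qquad\forall p,q\ge0$$ is equal to the algebra $\tilde{\mathcal{A}}_{conv.}$.
   Context: $\widehat{\mathcal{A}}$ is the algebra of formal power series $\sum_{p,q\ge0}\gamma_{p,q}a^pb^q$ in variables $a,b$ with $ab-ba=b^2$ (the $(a,b)$-adic completion of the polynomial algebra with this relation). $\tilde{\mathcal{A}}_{conv.}\subset\widehat{\mathcal{A}}$ is the subalgebra of series with $|\gamma_{p,q}|\le C_RR^{p+q}q!$ for some $R>1$, $C_R>0$. *)

From mathcomp Require Import all_boot all_order all_algebra.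
Set Implicit Arguments. Unset Strict Implicit. Unset Printing Implicit Defensive.
Import Order.TTheory GRing.Theory Num.Theory.
Local Open Scope ring_scope.

(* An element X = \sum_{p,q>=0} x_{p,q} a^p b^q of \hat{A} (the completion of
   k<a,b>/(ab - ba - b^2)) is uniquely determined by its family of coefficients
   in the normally ordered (PBW) basis a^p b^q.  We therefore represent
   \hat{A} (as a set) by coefficient families nat -> nat -> K. *)
Definition series (K : numFieldType) := nat -> nat -> K.

Definition Aconv (K : numFieldType) (x : series K) : Prop :=
  exists (R C : K), 1 < R /\ 0 < C /\
    forall p q : nat, `|x p q| <= C * R ^+ (p + q) * (q`!)%:R.

Definition W (K : numFieldType) (N : nat) (x : series K) : Prop :=
  exists (R C : K), 1 < R /\ 0 < C /\
    forall p q : nat,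
      `|x p q| <= C * R ^+ (p + q) * ((p + q)`!%:R / (p`!)%:R)
                  * (1 + p%:R + q%:R) ^+ N.

From mathcomp Require Import all_boot all_order all_algebra.
Set Implicit Arguments. Unset Strict Implicit. Unset Printing Implicit Defensive.
Import Order.TTheory GRing.Theory Num.Theory.
Local Open Scope ring_scope.

(* Both classes are "coefficients bounded by C R^(p+q) w(p,q)" for two weights
   w which agree up to a geometric factor: q! <= (p+q)!/p! = C(p+q,p) q!
   <= 2^(p+q) q!, and 1 <= (1+p+q)^N <= (2^N)^(p+q).  A geometric factor S^(p+q)
   is absorbed by replacing R with R S. *)

Lemma leq_bin_exp2 (n k : nat) : ('C(n, k) <= 2 ^ n)%N.
Proof.
elim: n k => [|n IHn] [|k] //=; first by rewrite bin0 expn_gt0.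
by rewrite binS expnS mul2n -addnn leq_add.
Qed.

Lemma bin_fact_addn (p q : nat) : ('C(p + q, p) * (p`! * q`!))%N = (p + q)`!.
Proof. by have := bin_fact (leq_addr q p); rewrite addKn. Qed.

Lemma leq_fact_mul_addn (p q : nat) : (p`! * q`! <= (p + q)`!)%N.
Proof. by rewrite -bin_fact_addn leq_pmull // bin_gt0 leq_addr. Qed.

Lemma leq_fact_addn (p q : nat) : ((p + q)`! <= 2 ^ (p + q) * (p`! * q`!))%N.
Proof. by rewrite -bin_fact_addn leq_mul2r leq_bin_exp2 orbT. Qed.

Lemma leq_add1n_exp (n N : nat) : ((1 + n) ^ N <= (2 ^ N) ^ n)%N.
Proof.
rewrite -expnM mulnC expnM; case: N => [|N]; first by rewrite !expn0.
by rewrite leq_exp2r // add1n ltn_expl.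
Qed.

Section Growth.
Variable K : numFieldType.

Definition growth (w : nat -> nat -> K) (x : series K) : Prop :=
  exists (R C : K), 1 < R /\ 0 < C /\
    forall p q : nat, `|x p q| <= C * R ^+ (p + q) * w p q.

Lemma Aconv_growth (x : series K) : Aconv x <-> growth (fun _ q => (q`!)%:R) x.
Proof. by []. Qed.

Definition W_weight (N p q : nat) : K :=
  (p + q)`!%:R / (p`!)%:R * (1 + p%:R + q%:R) ^+ N.

Lemma W_growth (N : nat) (x : series K) : W N x <-> growth (W_weight N) x.
Proof.
split=> -[R [C [R1 [C0 Hx]]]]; exists R, C; split=> //; split=> // p q.
- by rewrite /W_weight mulrA.
- by rewrite -mulrA; apply: Hx.
Qed.

Lemma growth_le (w1 w2 : nat -> nat -> K) (S : K) (x : series K) :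
  1 <= S -> (forall p q, w1 p q <= S ^+ (p + q) * w2 p q) ->
  growth w1 x -> growth w2 x.
Proof.
move=> S1 w12 [R [C [R1 [C0 Hx]]]].
have R0 : 0 < R := lt_trans ltr01 R1.
exists (R * S), C; split; last split=> //.
  exact: lt_le_trans R1 (ler_peMr (ltW R0) S1).
move=> p q; apply: (le_trans (Hx p q)).
rewrite exprMn -!mulrA; apply: ler_wpM2l; first exact: ltW.
by apply: ler_wpM2l (w12 p q); rewrite exprn_ge0 ?ltW.
Qed.

Lemma fact_ratio_ge (p q : nat) : (q`!)%:R <= (p + q)`!%:R / (p`!)%:R :> K.
Proof.
by rewrite ler_pdivlMr ?ltr0n ?fact_gt0 // -natrM ler_nat mulnC leq_fact_mul_addn.
Qed.

Lemma fact_ratio_le (p q : nat) :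
  (p + q)`!%:R / (p`!)%:R <= 2 ^+ (p + q) * (q`!)%:R :> K.
Proof.
rewrite ler_pdivrMr ?ltr0n ?fact_gt0 // -natrX -!natrM ler_nat.
by rewrite -mulnA [(q`! * _)%N]mulnC leq_fact_addn.
Qed.

Lemma natr_add1n (p q : nat) : 1 + p%:R + q%:R = (1 + p + q)%N%:R :> K.
Proof. by rewrite !natrD. Qed.

Lemma poly_weight_ge1 (N p q : nat) : 1 <= (1 + p%:R + q%:R) ^+ N :> K.
Proof. by rewrite natr_add1n exprn_ege1 // ler1n -addnA. Qed.

Lemma poly_weight_le (N p q : nat) :
  (1 + p%:R + q%:R) ^+ N <= (2 ^+ N) ^+ (p + q) :> K.
Proof. by rewrite natr_add1n -!natrX ler_nat -addnA leq_add1n_exp. Qed.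

Lemma W_weight_le (N p q : nat) :
  W_weight N p q <= (2 ^+ N.+1) ^+ (p + q) * (q`!)%:R.
Proof.
rewrite /W_weight exprSr exprMn [leLHS]mulrC -mulrA.
apply: ler_pM; rewrite ?fact_ratio_le ?poly_weight_le ?divr_ge0 //.
by rewrite natr_add1n exprn_ge0.
Qed.

Lemma W_weight_ge (N p q : nat) : (q`!)%:R <= W_weight N p q.
Proof.
rewrite /W_weight -[X in X <= _]mulr1.
by apply: ler_pM; rewrite ?fact_ratio_ge ?poly_weight_ge1.
Qed.

End Growth.

Theorem lemma1p1p6 (K : numFieldType) (N : nat) (x : series K) :
  W N x <-> Aconv x.
Proof.
split=> [/W_growth | /Aconv_growth] Hx; [apply/Aconv_growth | apply/W_growth].
- by apply: growth_le (@W_weight_le K N) Hx; rewrite exprn_ege1 // ler1n.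
- apply: growth_le (lexx 1) _ Hx => p q.
  by rewrite expr1n mul1r W_weight_ge.
Qed.
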